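(* Let $F$ be a unit tree and let $L,M$ be opposite politeral units of $F$. Then for every $!$-unit $!E$ of $F$: $!E$ dominates $L$ in $F$ if and only if $!E$ dominates $M$ in $F$.
   Context: Formulas are built from atoms by $\neg$ (on atoms only), binary $\wedge,\vee$ and unary $!$ (branching recurrence) and $?$ (branching corecurrence). Fix a formula $\mathbb{F}_0$. Oformulas are occurrences of subformulas of $\mathbb{F}_0$. Politerals are occurrences of literals $P$ or $\neg P$ that are not in the scope of $\neg$. The modal depth of an oformula is the number of its proper superoccurrences of the form $!E$ or $?E$. A unit is $E[\vec x]$, with $E$ an oformula and $\vec x$ a tuple of infinite bitstrings whose length is the modal depth of $E$. Parenthood: - $G_0[\vec x]$ and $G_1[\vec x]$ are the children of $(G_0\wedge G_1)[\vec x]$ and of $(G_0\vee G_1)[\vec x]$; - the $G[\vec x,y]$, for all infinite bitstrings $y$, are the children of $!G[\vec x]$ and of $?G[\vec x]$. The root is $\mathbb{F}_0[\,]$. ''Subunit'' and ''superunit'' are the reflexive-transitive closures of the child relation and its converse, and ''proper'' means distinct. The $\mathbb{F}_0$-origin $\tilde E$ of $E[\vec x]$ is $E$. $!$-, $?$-, $\wedge$-, $\vee$- and politeral units are those whose origin is of the corresponding form. The smallest common superunit of two units is their common superunit that is a subunit of all their common superunits. $E$ drives $G$ through $H$ iff $H$ is the smallest common superunit of $E,G$ and no proper $?$-superunit of $E$ is a subunit of $H$. A unit tree is a nonempty set $S$ of units such that, for each $E\in S$: all superunits of $E$ are in $S$; if $E$ is a $\wedge$- or $\vee$-unit, both children of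 $E$ are in $S$; and if $E$ is a $!$- or $?$-unit, at least one child of $E$ is in $S$. Runs are sequences of labeled moves $\wp\beta$ with $\wp\in\{\top,\bot\}$. For a run $\Theta$ and a string $\alpha$, $\Theta^{\alpha}$ keeps only the labmoves whose move begins with $\alpha$ and deletes that prefix. For an infinite bitstring $y$, $\Theta^{\preceq y}$ keeps only the labmoves $\wp\,u.\beta$ with $u$ a finite prefix of $y$ and deletes ''$u.$''. Fix an arbitrary run $\Omega$. Its projection on $\mathbb{F}_0[\,]$ is $\Omega$. If $\Theta$ is the projection on $E[\vec x]$, then the projection on the child $G_i[\vec x]$ of a $\wedge$/$\vee$-unit is $\Theta^{i.}$, and on the child $G[\vec x,y]$ of a $!$/$?$-unit it is $\Theta^{\preceq y}$. Politeral units $L,M$ are opposite iff $\tilde L$ and $\tilde M$ are literals one of which is the negation of the other and, for each $\wp\in\{\top,\bot\}$, the set of $\wp$-labeled moves in the projection of $\Omega$ on $L$ equals the set of $\neg\wp$-labeled moves in the projection of $\Omega$ on $M$. For a unit tree $F$ and $!E,G\in F$, a $!E$-over-$G$ domination chain in $F$ is a sequence $L_1,M_1,X_1,\dots,L_n,M_n,X_n$ ($n\ge1$) of units such that, writing $L_{n+1}=G$, for each $i\le n$: 1. $L_i,M_i$ are opposite politeral units of $F$; 2. $M_i$ drives $L_{i+1}$ through $X_i$; 3. $M_i$ drives no $L_j$ with $i+2\le j\le n+1$; 4. $M_i$ is not a subunit of $!E$; 5. $L_1$ is a subunit of $!E$. $!E$ dominates $G$ in $F$ iff $!E,G\in F$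 and either $G$ is a proper subunit of $!E$ or there exists a $!E$-over-$G$ domination chain in $F$. *)

From Stdlib Require Import List Bool.
Import ListNotations.

Inductive formula : Type :=
| Atom    : nat -> formula
| NegAtom : nat -> formula
| And     : formula -> formula -> formula
| Or      : formula -> formula -> formula
| Ofc     : formula -> formula
| Quest   : formula -> formula.

(** * Units
   A unit E[x] is encoded by the path from the root F0[] to it: each step
   is either [Dir b] (child G_b of a ∧/∨-unit, b=false for G_0, true for G_1)
   or [Br y] (child G[x,y] of a !/?-unit).  The oformula E is the path with
   the bitstrings erased, and x is the list of bitstrings y occurring on it. *)
Definition bitstring := nat -> bool.

Inductive step : Type :=
| Dir : bool -> step
| Br  : bitstring -> step.

Definition cunit := list step.  (* root-first *)

Fixpoint at_path (f : formula) (p : cunit) : option formula :=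
  match p with
  | [] => Some f
  | s :: p' =>
      match f, s with
      | And g h, Dir b => at_path (if b then h else g) p'
      | Or  g h, Dir b => at_path (if b then h else g) p'
      | Ofc g, Br _ => at_path g p'
      | Quest g, Br _ => at_path g p'
      | _, _ => None
      end
  end.

Definition is_unit (F0 : formula) (u : cunit) : Prop := at_path F0 u <> None.

Definition origin (F0 : formula) (u : cunit) : option formula := at_path F0 u.

Definition is_ofc_unit F0 u : Prop := exists g, origin F0 u = Some (Ofc g).
Definition is_quest_unit F0 u : Prop := exists g, origin F0 u = Some (Quest g).
Definition is_politeral_unit F0 u : Prop :=
  exists n, origin F0 u = Some (Atom n) \/ origin F0 u = Some (NegAtom n).

(* E is a subunit of H (H is a superunit of E): reflexive-transitive closure
   of the child relation = H is a prefix of E. *)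
Definition subunit (E H : cunit) : Prop := exists q, E = H ++ q.
Definition proper_subunit (E H : cunit) : Prop := subunit E H /\ E <> H.

Definition child (F0 : formula) (C P : cunit) : Prop :=
  is_unit F0 C /\ exists s, C = P ++ [s].

Definition smallest_common_superunit F0 (H E G : cunit) : Prop :=
  is_unit F0 H /\ subunit E H /\ subunit G H /\
  (forall K, is_unit F0 K -> subunit E K -> subunit G K -> subunit H K).

Definition drives F0 (E G H : cunit) : Prop :=
  smallest_common_superunit F0 H E G /\
  ~ (exists K, is_quest_unit F0 K /\ proper_subunit E K /\ subunit K H).

Definition unit_tree (F0 : formula) (S : cunit -> Prop) : Prop :=
  (exists E, S E) /\
  (forall E, S E -> is_unit F0 E) /\
  (forall E, S E -> forall H, subunit E H -> S H) /\
  (forall E, S E ->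
     (forall g h, origin F0 E = Some (And g h) \/ origin F0 E = Some (Or g h) ->
        S (E ++ [Dir false]) /\ S (E ++ [Dir true])) /\
     (forall g, origin F0 E = Some (Ofc g) \/ origin F0 E = Some (Quest g) ->
        exists y, S (E ++ [Br y]))).

Inductive sym : Type := S0 | S1 | Dot | Other (n : nat).
Definition move := list sym.
Inductive player : Type := Top | Bot.
Definition neg_player (p : player) : player :=
  match p with Top => Bot | Bot => Top end.
Definition labmove := (player * move)%type.

(* A run is a (finite or infinite) sequence of labmoves; we encode it as a
   function nat -> option labmove, the run being the sequence of its
   [Some] entries in order ([None] entries are ignored). *)
Definition run := nat -> option labmove.

Definition sym_eqb (a b : sym) : bool :=
  match a, b with
  | S0, S0 | S1, S1 | Dot, Dot => true
  | Other n, Other m => Nat.eqb n m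
  | _, _ => false
  end.

Fixpoint strip_prefix (alpha m : move) : option move :=
  match alpha, m with
  | [], _ => Some m
  | a :: alpha', b :: m' => if sym_eqb a b then strip_prefix alpha' m' else None
  | _ :: _, [] => None
  end.

(* If m = u.beta with u a finite prefix of y (u a bitstring), return beta. *)
Fixpoint strip_branch (y : bitstring) (k : nat) (m : move) : option move :=
  match m with
  | Dot :: beta => Some beta
  | S0 :: m' => if y k then None else strip_branch y (S k) m'
  | S1 :: m' => if y k then strip_branch y (S k) m' else None
  | _ => None
  end.

Definition map_run (f : move -> option move) (T : run) : run :=
  fun n => match T n with
           | Some (p, m) => match f m with Some b => Some (p, b) | None => None end
           | None => None
           end.

Definition bit (b : bool) : sym := if b then S1 else S0.

Definition proj_step (s : step) (T : run) : run :=
  match s with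
  | Dir b => map_run (strip_prefix [bit b; Dot]) T
  | Br y => map_run (strip_branch y 0) T
  end.

Fixpoint proj (T : run) (u : cunit) : run :=
  match u with
  | [] => T
  | s :: u' => proj (proj_step s T) u'
  end.

Definition occurs (T : run) (p : player) (m : move) : Prop :=
  exists n, T n = Some (p, m).

Definition opposite F0 (Omega : run) (L M : cunit) : Prop :=
  (exists n, (origin F0 L = Some (Atom n) /\ origin F0 M = Some (NegAtom n)) \/
             (origin F0 L = Some (NegAtom n) /\ origin F0 M = Some (Atom n))) /\
  (forall p m, occurs (proj Omega L) p m <-> occurs (proj Omega M) (neg_player p) m).

(* A !E-over-G domination chain L_1,M_1,X_1,...,L_n,M_n,X_n in F, encoded
   0-indexed by functions Ls Ms Xs with indices 0..n-1, and L_{n+1} = G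
   encoded as [Lx n] below. *)
Definition domination_chain F0 (Omega : run) (F : cunit -> Prop) (E G : cunit)
  (n : nat) (Ls Ms Xs : nat -> cunit) : Prop :=
  let Lx := fun j => if Nat.ltb j n then Ls j else G in
  1 <= n /\
  (forall i, i < n ->
     F (Ls i) /\ F (Ms i) /\ is_politeral_unit F0 (Ls i) /\
     is_politeral_unit F0 (Ms i) /\ opposite F0 Omega (Ls i) (Ms i) /\
     drives F0 (Ms i) (Lx (S i)) (Xs i) /\
     (forall j, i + 2 <= j <= n -> forall H, ~ drives F0 (Ms i) (Lx j) H) /\
     ~ subunit (Ms i) E) /\
  subunit (Ls 0) E.

Definition dominates F0 (Omega : run) (F : cunit -> Prop) (E G : cunit) : Prop :=
  F E /\ F G /\ is_ofc_unit F0 E /\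
  (proper_subunit G E \/
   exists n Ls Ms Xs, domination_chain F0 Omega F E G n Ls Ms Xs).

From Stdlib Require Import List Arith Lia Classical Wf_nat.
Import ListNotations.

(* Opposite politeral units L, M of a unit tree F play symmetric roles, so
   it suffices to show one direction: if !E dominates L then !E dominates M.
   - If M is a subunit of !E it is a proper one, since a politeral unit is
     not a !-unit.
   - If L is a proper subunit of !E, the one-link sequence L, M, M is a
     !E-over-M domination chain: M drives itself through itself.
   - Otherwise there is a !E-over-L chain L_1,M_1,X_1,...,L_n,M_n,X_n.
     Append the link L, M; in the resulting sequence M_1,...,M_n,M pick the
     first M_i that drives M (M itself does).  Cutting the sequence after
     the i-th link and redirecting its end to M yields a !E-over-M chain;
     the minimality of i is exactly condition 3 for the new target M. *)

Lemma politeral_is_unit (F0 : formula) (u : cunit) :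
  is_politeral_unit F0 u -> is_unit F0 u.
Proof.
  intros [k [Hu | Hu]]; unfold is_unit; unfold origin in Hu; rewrite Hu;
    discriminate.
Qed.

Lemma politeral_not_ofc (F0 : formula) (u : cunit) :
  is_politeral_unit F0 u -> ~ is_ofc_unit F0 u.
Proof.
  intros [k [Hu | Hu]] [g Hg]; congruence.
Qed.

(* Every unit drives itself through itself: it is its own smallest common
   superunit with itself, and no proper superunit lies below itself. *)
Lemma drives_self (F0 : formula) (u : cunit) : is_unit F0 u -> drives F0 u u u.
Proof.
  intros Hu. split.
  - repeat split; auto; exists []; rewrite app_nil_r; reflexivity.
  - intros [K [_ [[[q Hq] HneK] [q' Hq']]]].
    apply HneK. subst K.
    assert (Hlen := f_equal (@length _) Hq). rewrite !length_app in Hlen.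
    destruct q' as [| s q']; simpl in Hlen; [| lia].
    rewrite app_nil_r. reflexivity.
Qed.

Lemma opposite_sym (F0 : formula) (Omega : run) (L M : cunit) :
  opposite F0 Omega L M -> opposite F0 Omega M L.
Proof.
  intros [[k Hlit] Hmoves]. split.
  - exists k; tauto.
  - intros p m. rewrite Hmoves. destruct p; simpl; tauto.
Qed.

(* The sequence f_0, ..., f_(n-1), d, d, ...; the definition of chains uses
   it to append the target G = L_(n+1) to L_1, ..., L_n. *)
Definition extend (f : nat -> cunit) (n : nat) (d : cunit) : nat -> cunit :=
  fun j => if Nat.ltb j n then f j else d.

Lemma extend_lt (f : nat -> cunit) (n : nat) (d : cunit) (j : nat) :
  j < n -> extend f n d j = f j.
Proof. intros Hj. unfold extend. apply Nat.ltb_lt in Hj. now rewrite Hj. Qed.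

Lemma extend_ge (f : nat -> cunit) (n : nat) (d : cunit) (j : nat) :
  n <= j -> extend f n d j = d.
Proof. intros Hj. unfold extend. apply Nat.ltb_ge in Hj. now rewrite Hj. Qed.

Section Domination.

Variable F0 : formula.
Variable Omega : run.
Variable F : cunit -> Prop.

(* Conditions 1 and 4 of a chain for one link (L_i, M_i): they do not
   involve the rest of the chain, so links keep them when the chain is
   cut or extended. *)
Definition good_link (E L M : cunit) : Prop :=
  F L /\ F M /\ is_politeral_unit F0 L /\ is_politeral_unit F0 M /\
  opposite F0 Omega L M /\ ~ subunit M E.

(* A domination chain in terms of good links: conditions 2 and 3 are the
   ones that refer to the target sequence L_2, ..., L_n, G. *)
Lemma domination_chain_links (E G : cunit) (n : nat) (Ls Ms Xs : nat -> cunit) :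
  domination_chain F0 Omega F E G n Ls Ms Xs <->
  1 <= n /\
  (forall i, i < n ->
     good_link E (Ls i) (Ms i) /\
     drives F0 (Ms i) (extend Ls n G (S i)) (Xs i) /\
     (forall j, i + 2 <= j <= n -> forall H,
        ~ drives F0 (Ms i) (extend Ls n G j) H)) /\
  subunit (Ls 0) E.
Proof.
  unfold domination_chain, good_link, extend. split.
  - intros [Hn [Hlinks HL0]]. split; [exact Hn |]. split; [| exact HL0].
    intros i Hi. destruct (Hlinks i Hi) as (A1 & A2 & A3 & A4 & A5 & A6 & A7 & A8).
    tauto.
  - intros [Hn [Hlinks HL0]]. split; [exact Hn |]. split; [| exact HL0].
    intros i Hi. destruct (Hlinks i Hi) as [(A1 & A2 & A3 & A4 & A5 & A8) [A6 A7]].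
    tauto.
Qed.

Lemma chain_single (E L M : cunit) :
  subunit L E -> good_link E L M ->
  domination_chain F0 Omega F E M 1
    (fun _ => L) (fun _ => M) (fun _ => M).
Proof.
  intros HLE HLM. apply domination_chain_links.
  split; [lia |]. split; [| exact HLE].
  intros i Hi. split; [exact HLM |]. split.
  - rewrite extend_ge by lia.
    apply drives_self, politeral_is_unit. apply HLM.
  - intros j Hj. lia.
Qed.

(* Redirecting a chain: a !E-over-G chain followed by a good link (G, M)
   can be cut at the first M_i driving M and redirected to end at M. *)
Lemma chain_redirect (E G M : cunit) (n : nat) (Ls Ms Xs : nat -> cunit) :
  domination_chain F0 Omega F E G n Ls Ms Xs -> good_link E G M ->
  exists n' Ls' Ms' Xs', domination_chain F0 Omega F E M n' Ls' Ms' Xs'.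
Proof.
  intros Hchain HGM.
  apply domination_chain_links in Hchain as [Hn [Hlinks HL0]].
  set (Ls' := extend Ls n G). set (Ms' := extend Ms n M).
  assert (Hgood : forall k, k <= n -> good_link E (Ls' k) (Ms' k)).
  { intros k Hk. unfold Ls', Ms'.
    destruct (Nat.lt_ge_cases k n) as [Hlt | Hge].
    - rewrite !extend_lt by exact Hlt. apply (Hlinks k Hlt).
    - rewrite !extend_ge by exact Hge. exact HGM. }
  (* the first link whose M-component drives M; the appended link does *)
  set (drives_M := fun i => i <= n /\ exists H, drives F0 (Ms' i) M H).
  destruct (dec_inh_nat_subset_has_unique_least_element drives_M
              (fun i => classic (drives_M i))) as [i [[[Hin [H HdrH]] Hleast] _]].
  { exists n. split; [lia |]. exists M. unfold Ms'. rewrite extend_ge by lia.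
    apply drives_self, politeral_is_unit. apply HGM. }
  assert (Hmin : forall k H', k < i -> ~ drives F0 (Ms' k) M H').
  { intros k H' Hk Hdr. assert (i <= k) by (apply Hleast; split; [lia | eauto]).
    lia. }
  exists (S i), Ls', Ms', (extend Xs i H).
  apply domination_chain_links.
  split; [lia |]. split.
  - intros k Hk. split; [apply Hgood; lia |]. split.
    + (* condition 2: the old link for k < i, the chosen one for k = i *)
      destruct (Nat.lt_ge_cases k i) as [Hki | Hki].
      * rewrite !extend_lt by lia. unfold Ms'. rewrite extend_lt by lia.
        apply (Hlinks k ltac:(lia)).
      * replace k with i by lia. rewrite !extend_ge by lia. exact HdrH.
    + (* condition 3: the old chain for old targets, minimality for M *)
      intros j Hj H' Hdr.
      destruct (Nat.lt_ge_cases j (S i)) as [Hji | Hji].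
      * destruct (Hlinks k ltac:(lia)) as (_ & _ & Hnd).
        apply (Hnd j ltac:(lia) H').
        unfold Ms' in Hdr. rewrite !extend_lt in Hdr by lia. exact Hdr.
      * rewrite extend_ge in Hdr by exact Hji.
        exact (Hmin k H' ltac:(lia) Hdr).
  - unfold Ls'. rewrite extend_lt by lia. exact HL0.
Qed.

Lemma dominates_opposite (E L M : cunit) :
  F L -> F M -> is_politeral_unit F0 L -> is_politeral_unit F0 M ->
  opposite F0 Omega L M ->
  dominates F0 Omega F E L -> dominates F0 Omega F E M.
Proof.
  intros FL FM PL PM OLM [FE [_ [OE Hdom]]].
  split; [exact FE |]. split; [exact FM |]. split; [exact OE |].
  destruct (classic (subunit M E)) as [HME | HME].
  - left. split; [exact HME |]. intros ->. exact (politeral_not_ofc F0 E PM OE).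
  - right.
    assert (Hlink : good_link E L M) by (repeat (split; [assumption |]); assumption).
    destruct Hdom as [[HLE _] | [n [Ls [Ms [Xs Hchain]]]]].
    + exists 1, (fun _ => L), (fun _ => M), (fun _ => M).
      exact (chain_single E L M HLE Hlink).
    + exact (chain_redirect E L M n Ls Ms Xs Hchain Hlink).
Qed.

End Domination.

Theorem lemma8p4 (F0 : formula) (Omega : run) (F : cunit -> Prop)
  (L M : cunit) :
  unit_tree F0 F ->
  F L -> F M ->
  is_politeral_unit F0 L -> is_politeral_unit F0 M ->
  opposite F0 Omega L M ->
  forall E : cunit, F E -> is_ofc_unit F0 E ->
    (dominates F0 Omega F E L <-> dominates F0 Omega F E M).
Proof.
  intros _ FL FM PL PM OLM E _ _. split.
  - exact (dominates_opposite F0 Omega F E L M FL FM PL PM OLM).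
  - exact (dominates_opposite F0 Omega F E M L FM FL PM PL (opposite_sym F0 Omega L M OLM)).
Qed.
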